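(* For $\sigma\in\bigwedge^3V_{10}^\vee$, there exists a flag $V_1\subset V_6\subset V_{10}$ with $\sigma(V_1,V_6,V_{10})=0$ if and only if there exists a flag $V_1\subset V_8\subset V_{10}$ with $\sigma(V_1,V_8,V_8)=0$.
   Context: $V_{10}$ is a $10$-dimensional complex vector space; $V_i$ denotes an $i$-dimensional subspace; $\sigma(A,B,C)=0$ means $\sigma(a,b,c)=0$ for all $a\in A,b\in B,c\in C$. *)

From HB Require Import structures.
From mathcomp Require Import all_boot all_order all_algebra.
From mathcomp Require Import reals.
From mathcomp.real_closed Require Import complex.
Set Implicit Arguments. Unset Strict Implicit. Unset Printing Implicit Defensive.
Import GRing.Theory Num.Theory.
Local Open Scope ring_scope.

(* V10 = row vectors 'rV[C]_10; subspaces of V10 are represented (mxalgebra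
   style) by matrices 'M[C]_10 via their row space. *)

(* sigma : V10 -> V10 -> V10 -> C is an element of /\^3 V10^vee:
   trilinear and alternating. *)
Definition trilinear (C : fieldType) (n : nat)
    (s : 'rV[C]_n -> 'rV[C]_n -> 'rV[C]_n -> C) : Prop :=
  [/\ forall (c : C) x x' y z, s (c *: x + x') y z = c * s x y z + s x' y z,
      forall (c : C) x y y' z, s x (c *: y + y') z = c * s x y z + s x y' z &
      forall (c : C) x y z z', s x y (c *: z + z') = c * s x y z + s x y z'].

Definition alternating3 (C : fieldType) (n : nat)
    (s : 'rV[C]_n -> 'rV[C]_n -> 'rV[C]_n -> C) : Prop :=
  [/\ forall x z, s x x z = 0, forall x y, s x y x = 0 &
      forall x y, s y x x = 0].

Definition is_3form (C : fieldType) (n : nat)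
    (s : 'rV[C]_n -> 'rV[C]_n -> 'rV[C]_n -> C) : Prop :=
  trilinear s /\ alternating3 s.

Definition vanishes_on (C : fieldType) (n p q r : nat)
    (s : 'rV[C]_n -> 'rV[C]_n -> 'rV[C]_n -> C)
    (A : 'M[C]_(p, n)) (B : 'M[C]_(q, n)) (D : 'M[C]_(r, n)) : Prop :=
  forall a b d, (a <= A)%MS -> (b <= B)%MS -> (d <= D)%MS -> s a b d = 0.

From HB Require Import structures.
From mathcomp Require Import all_boot all_order all_algebra.
From mathcomp Require Import reals.
From mathcomp.real_closed Require Import complex.
From mathcomp Require Import zify.
Set Implicit Arguments. Unset Strict Implicit. Unset Printing Implicit Defensive.
Import GRing.Theory Num.Theory.
Local Open Scope ring_scope.

(* Let v span V1.  Contracting sigma with v gives the bilinear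
   form (x, y) |-> sigma(v, x, y), which is alternating; it is represented by
   a matrix M_v with sigma(v, x, y) = x M_v y^T, and v M_v = 0.  In these
   terms sigma(V1, V, V10) = 0 says that V lies in the radical ker M_v, and
   sigma(V1, V, V) = 0 says that V is M_v-isotropic.  Two facts about an
   alternating form M on F^n then give the two implications:
   - a subspace V of the radical with dim V + 3 <= n lies in an isotropic
     subspace of dimension dim V + 2: add any u outside V, then any w
     orthogonal to u outside V + u;
   - an isotropic subspace W meets the radical in dimension at least
     2 dim W - n, because W M lies in the orthogonal of W;
   since v itself lies in the radical, both constructions keep V1 inside. *)

Section RowSpaces.
Variables (F : fieldType) (n : nat).

Lemma row_outside m1 m2 (A : 'M[F]_(m1, n)) (B : 'M[F]_(m2, n)) :
  (\rank A < \rank B)%N -> exists2 u : 'rV_n, (u <= B)%MS & ~~ (u <= A)%MS.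
Proof.
move=> ltAB; have /row_subPn[i iA] : ~~ (B <= A)%MS.
  by apply: contraTN ltAB => /mxrankS; rewrite -leqNgt.
by exists (row i B); rewrite ?row_sub.
Qed.

Lemma mxrank_adds_row m (A : 'M[F]_(m, n)) (u : 'rV_n) :
  ~~ (u <= A)%MS -> \rank (A + u)%MS = (\rank A).+1.
Proof.
move=> uA; have u_nz : u != 0 by apply: contraNneq uA => ->; rewrite sub0mx.
rewrite mxrank_disjoint_sum ?rank_rV ?u_nz ?addn1 //.
apply/eqP/rowV0P => x; rewrite sub_capmx => /andP[xA /sub_rVP[a xE]].
apply/eqP; apply: contraNT uA; rewrite xE scaler_eq0 negb_or => /andP[a_nz _].
by rewrite -(scalerK a_nz u) scalemx_sub // -xE.
Qed.

Lemma submx_of_rank m1 m2 (A : 'M[F]_(m1, n)) (B : 'M[F]_(m2, n)) k :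
  (A <= B)%MS -> (\rank A <= k <= \rank B)%N ->
  exists C : 'M[F]_n, [/\ (A <= C)%MS, (C <= B)%MS & \rank C = k].
Proof.
move=> sAB /andP[]; elim: k => [|k IH] leAk lekB.
  by exists <<A>>%MS; rewrite !genmxE sAB; split=> //; lia.
have [eqAk | neAk] := eqVneq (\rank A) k.+1.
  by exists <<A>>%MS; rewrite !genmxE sAB eqAk.
have [||C [sAC sCB rC]] := IH; [lia | lia |].
have [|u uB uC] := row_outside (A := C) (B := B); first by rewrite rC.
exists (C + u)%MS; rewrite mxrank_adds_row // rC addsmx_sub sCB uB.
by rewrite (submx_trans sAC (addsmxSl _ _)).
Qed.

Lemma rank1_span m (A : 'M[F]_(m, n)) :
  \rank A = 1%N -> exists v : 'rV_n, (A :=: v)%MS.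
Proof.
move=> rA; have /rowV0Pn[v vA v_nz] : A != 0 by rewrite -mxrank_eq0 rA.
exists v; apply/eqmxP; rewrite vA andbT.
by rewrite -(mxrank_leqif_sup vA).2 rank_rV v_nz rA.
Qed.

Lemma mulmx_trE m1 m2 (A : 'M[F]_(m1, n)) (B : 'M[F]_(m2, n)) i j :
  (A *m B^T) i j = (row i A *m (row j B)^T) 0 0.
Proof. by rewrite !mxE; apply: eq_bigr => k _; rewrite !mxE. Qed.

End RowSpaces.

Section AlternatingBilinear.
Variables (F : fieldType) (n : nat) (M : 'M[F]_n).
Hypothesis M_alt : forall x : 'rV[F]_n, x *m M *m x^T = 0.

Definition orth m1 m2 (A : 'M[F]_(m1, n)) (B : 'M[F]_(m2, n)) :=
  A *m M *m B^T = 0.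

Lemma alt_skew : M^T = - M.
Proof.
have skew (x y : 'rV_n) : x *m M *m y^T = - (y *m M *m x^T).
  have := M_alt (x + y); rewrite linearD !mulmxDl !mulmxDr !M_alt.
  by rewrite add0r addr0 => /eqP; rewrite addr_eq0 => /eqP.
have entry k l :
    M k l = ((delta_mx 0 k : 'rV_n) *m M *m (delta_mx 0 l : 'rV_n)^T) 0 0.
  by rewrite -rowE trmx_delta -colE !mxE.
by apply/matrixP => i j; rewrite !mxE (entry j i) (entry i j) skew mxE.
Qed.

Lemma orth_sym m1 m2 (A : 'M[F]_(m1, n)) (B : 'M[F]_(m2, n)) :
  orth A B -> orth B A.
Proof.
move=> oAB; have : (A *m M *m B^T)^T = 0 by rewrite oAB trmx0.
rewrite !trmx_mul trmxK alt_skew mulNmx mulmxN mulmxA => /eqP.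
by rewrite oppr_eq0 => /eqP.
Qed.

Lemma orth_addsl m1 m2 m3 (A : 'M[F]_(m1, n)) (B : 'M[F]_(m2, n))
    (C : 'M[F]_(m3, n)) :
  orth A C -> orth B C -> orth (A + B)%MS C.
Proof.
rewrite /orth => oAC oBC.
have /submxP[D ->] : ((A + B)%MS <= col_mx A B)%MS by rewrite -addsmxE.
by rewrite -!mulmxA mul_col_mx !mulmxA oAC oBC col_mx0 mulmx0.
Qed.

Lemma isotropic_adds m1 m2 (A : 'M[F]_(m1, n)) (B : 'M[F]_(m2, n)) :
  orth A A -> orth B B -> orth A B -> orth (A + B)%MS (A + B)%MS.
Proof.
move=> oAA oBB oAB; apply: orth_addsl; apply: orth_sym; apply: orth_addsl.
- exact: oAA.
- exact: orth_sym.
- exact: oAB.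
- exact: oBB.
Qed.

Lemma isotropic_extension (V : 'M[F]_n) :
  V *m M = 0 -> (\rank V + 3 <= n)%N ->
  exists W : 'M[F]_n,
    [/\ (V <= W)%MS, \rank W = (\rank V + 2)%N & orth W W].
Proof.
move=> VM rV; have oV m (B : 'M[F]_(m, n)) : orth V B.
  by rewrite /orth VM mul0mx.
have [|u _ uV] := row_outside (A := V) (B := 1%:M : 'M[F]_n).
  by rewrite mxrank1; lia.
set U := (V + u)%MS; have rU : \rank U = (\rank V).+1 by apply: mxrank_adds_row.
(* the vectors orthogonal to u form a hyperplane (or everything) *)
set Wu := kermx (M *m u^T).
have rWu : (n.-1 <= \rank Wu)%N.
  by rewrite mxrank_ker; have := rank_leq_col (M *m u^T); lia.
have [|w wWu wU] := row_outside (A := U) (B := Wu); first by rewrite rU; lia.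
have owu : orth w u by rewrite /orth -mulmxA; apply/sub_kermxP.
exists (U + w)%MS; split.
- exact: submx_trans (addsmxSl V u) (addsmxSl U w).
- by rewrite mxrank_adds_row // rU addn2.
apply: isotropic_adds; last apply: orth_addsl.
- by apply: isotropic_adds; [apply: oV | apply: M_alt | apply: oV].
- exact: M_alt.
- exact: oV.
- exact: orth_sym.
Qed.

(* An isotropic space W meets the radical ker M in dimension at least
   2 dim W - n, since its image W M is orthogonal to W. *)
Lemma isotropic_meets_radical m (W : 'M[F]_(m, n)) :
  orth W W -> (2 * \rank W <= \rank (W :&: kermx M) + n)%N.
Proof.
move=> oWW; have rWM : (\rank (W *m M) <= n - \rank W)%N.
  rewrite -(mxrank_tr W) -mxrank_ker; apply: mxrankS; exact/sub_kermxP.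
have := mxrank_mul_ker W M; have := rank_leq_col W; lia.
Qed.

End AlternatingBilinear.

Section LinearForm.
Variables (F : fieldType) (V : lmodType F) (f : V -> F).
Hypothesis f_lin : forall c x y, f (c *: x + y) = c * f x + f y.

Lemma linform0 : f 0 = 0.
Proof. by have := f_lin (-1) 0 0; rewrite scaler0 addr0 mulN1r addNr. Qed.

Lemma linformD x y : f (x + y) = f x + f y.
Proof. by rewrite -[x]scale1r f_lin mul1r scale1r. Qed.

Lemma linformZ c x : f (c *: x) = c * f x.
Proof. by rewrite -[c *: x]addr0 f_lin linform0 addr0. Qed.

Lemma linform_sum I (r : seq I) (P : pred I) (G : I -> V) :
  f (\sum_(i <- r | P i) G i) = \sum_(i <- r | P i) f (G i).
Proof. exact: (big_morph f linformD linform0). Qed.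

End LinearForm.

Lemma linform_coord (F : fieldType) (n : nat) (f : 'rV[F]_n -> F) :
  (forall c x y, f (c *: x + y) = c * f x + f y) ->
  forall x, f x = \sum_j x 0 j * f (delta_mx 0 j).
Proof.
move=> f_lin x; rewrite {1}(row_sum_delta x) (linform_sum f_lin).
by apply: eq_bigr => j _; rewrite (linformZ f_lin).
Qed.

Section AlternatingTrilinear.
Variables (F : fieldType) (n : nat).
Variable s : 'rV[F]_n -> 'rV[F]_n -> 'rV[F]_n -> F.
Hypothesis s3 : is_3form s.

Lemma form_lin1 y z c x x' : s (c *: x + x') y z = c * s x y z + s x' y z.
Proof. by case: s3 => [[lin _ _] _]. Qed.

Lemma form_lin2 x z c y y' : s x (c *: y + y') z = c * s x y z + s x y' z.
Proof. by case: s3 => [[_ lin _] _]. Qed.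

Lemma form_lin3 x y c z z' : s x y (c *: z + z') = c * s x y z + s x y z'.
Proof. by case: s3 => [[_ _ lin] _]. Qed.

Lemma formZ1 c x y z : s (c *: x) y z = c * s x y z.
Proof. exact: (linformZ (f := fun x => s x y z) (form_lin1 y z)). Qed.

Lemma form_alt12 x z : s x x z = 0.
Proof. by case: s3 => [_ [alt _ _]]. Qed.

Lemma form_alt23 x y : s x y y = 0.
Proof. by case: s3 => [_ [_ _ alt]]. Qed.

Definition contraction (v : 'rV[F]_n) : 'M[F]_n :=
  \matrix_(i, j) s v (delta_mx 0 i) (delta_mx 0 j).

Lemma contractionE v x y : s v x y = (x *m contraction v *m y^T) 0 0.
Proof.
rewrite (linform_coord (f := fun x => s v x y) (form_lin2 v y)) !mxE.
under eq_bigr => i _.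
  by rewrite (linform_coord (form_lin3 v (delta_mx 0 i))) mulr_sumr; over.
under [RHS]eq_bigr => j _ do rewrite !mxE mulr_suml.
rewrite exchange_big /=; apply: eq_bigr => j _; apply: eq_bigr => i _.
by rewrite mxE -mulrA [y 0 j * _]mulrC.
Qed.

Lemma contraction_alt v (x : 'rV[F]_n) : x *m contraction v *m x^T = 0.
Proof.
by apply/matrixP => i j; rewrite !ord1 [RHS]mxE -contractionE form_alt23.
Qed.

Lemma contraction_self v : v *m contraction v = 0.
Proof.
apply/rowP => j; rewrite [RHS]mxE.
have -> : (v *m contraction v) 0 j =
    (v *m contraction v *m (delta_mx 0 j : 'rV_n)^T) 0 0.
  by rewrite trmx_delta -colE [RHS]mxE.
by rewrite -contractionE form_alt12.
Qed.

Lemma vanishes_on_spanE m1 m2 m3 (A : 'M[F]_(m1, n)) (v : 'rV[F]_n)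
    (B : 'M[F]_(m2, n)) (D : 'M[F]_(m3, n)) :
  (A :=: v)%MS -> vanishes_on s A B D <-> B *m contraction v *m D^T = 0.
Proof.
move=> Av; split=> [van | BMD a b d].
  apply/matrixP => i j; rewrite mulmx_trE row_mul -contractionE mxE.
  by apply: van; rewrite ?Av ?row_sub.
rewrite Av => /sub_rVP[c ->] /submxP[X ->] /submxP[Y ->].
rewrite formZ1 contractionE.
have -> : X *m B *m contraction v *m (Y *m D)^T =
    X *m (B *m contraction v *m D^T) *m Y^T by rewrite trmx_mul !mulmxA.
by rewrite BMD mulmx0 mul0mx mxE mulr0.
Qed.

Lemma radical_flag_extends (V1 V : 'M[F]_n) :
  \rank V1 = 1%N -> (V1 <= V)%MS -> vanishes_on s V1 V 1%:M ->
  (\rank V + 3 <= n)%N ->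
  exists W : 'M[F]_n,
    [/\ \rank W = (\rank V + 2)%N, (V1 <= W)%MS & vanishes_on s V1 W W].
Proof.
move=> r1 V1V; have [v V1v] := rank1_span r1.
move=> /(vanishes_on_spanE _ _ V1v); rewrite trmx1 mulmx1 => VM rV.
have [W [VW rW oWW]] := isotropic_extension (contraction_alt v) VM rV.
exists W; split=> //; first exact: submx_trans VW.
exact/(vanishes_on_spanE _ _ V1v).
Qed.

Lemma isotropic_flag_shrinks k (V1 W : 'M[F]_n) :
  \rank V1 = 1%N -> (V1 <= W)%MS -> vanishes_on s V1 W W ->
  (0 < k)%N -> (k + n <= 2 * \rank W)%N ->
  exists V : 'M[F]_n,
    [/\ \rank V = k, (V1 <= V)%MS & vanishes_on s V1 V 1%:M].
Proof.
move=> r1 V1W; have [v V1v] := rank1_span r1.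
move=> /(vanishes_on_spanE _ _ V1v) oWW k_gt0 rW.
have vWK : (v <= W :&: kermx (contraction v))%MS.
  by rewrite sub_capmx -V1v V1W; apply/sub_kermxP/contraction_self.
have rWK := isotropic_meets_radical oWW.
have rv : \rank v = 1%N by rewrite -V1v.
have [|V [vV VWK rV]] := submx_of_rank (k := k) vWK; first by rewrite rv; lia.
exists V; split; rewrite ?V1v //.
apply/(vanishes_on_spanE _ _ V1v); rewrite trmx1 mulmx1.
by apply/sub_kermxP; apply: submx_trans VWK (capmxSr _ _).
Qed.

End AlternatingTrilinear.

Theorem lemma4p1 (R : realType)
    (sigma : 'rV[R[i]]_10 -> 'rV[R[i]]_10 -> 'rV[R[i]]_10 -> R[i]) :
  is_3form sigma ->
  ((exists (V1 V6 : 'M[R[i]]_10),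
      [/\ \rank V1 = 1%N, \rank V6 = 6%N, (V1 <= V6)%MS &
          vanishes_on sigma V1 V6 (1%:M : 'M[R[i]]_10)])
   <->
   (exists (V1 V8 : 'M[R[i]]_10),
      [/\ \rank V1 = 1%N, \rank V8 = 8%N, (V1 <= V8)%MS &
          vanishes_on sigma V1 V8 V8])).
Proof.
move=> s3; split.
- case=> V1 [V6 [r1 r6 V16 van]].
  have [|V8 [r8 V18 van8]] := radical_flag_extends s3 r1 V16 van.
    by rewrite r6.
  by exists V1, V8; rewrite r8 r6.
- case=> V1 [V8 [r1 r8 V18 van]].
  have [||V6 [r6 V16 van6]] := isotropic_flag_shrinks (k := 6) s3 r1 V18 van.
  - by [].
  - by rewrite r8.
  by exists V1, V6; split.
Qed.
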